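(* Let $R$ be a commutative ring endowed with a translation-invariant partial order $\le$ on its additive group such that $R^+$ is stable under multiplication with squares, i.e. $r^2s\in R^+$ for all $r\in R$, $s\in R^+$. If $R$ is archimedean and localizable, then $pq\in R^+$ for all $p,q\in R^+$ (so $R$ is a partially ordered commutative ring).
   Context: Rings are commutative with unit $1$; $\mathbb{N}=\{1,2,\dots\}$. Translation-invariant means $r\le s$ implies $r+t\le s+t$; $R^+=\{r:0\le r\}$. A partially ordered commutative ring is such a ring whose positive cone is closed under multiplication and contains all squares. $R$ is archimedean if whenever $g,h\in R$ satisfy $kg+h\in R^+$ for all $k\in\mathbb{N}$, then $g\in R^+$. $\mathrm{Loc}(R)$ is the set of $s\in 1+R^+$ such that for all $r\in R$, $rs\in R^+$ implies $r\in R^+$. $R$ is localizable if for every $r\in R$ there exists $s\in\mathrm{Loc}(R)$ with $-s\le r\le s$. *)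

From mathcomp Require Import all_boot all_algebra.
Set Implicit Arguments. Unset Strict Implicit. Unset Printing Implicit Defensive.
Import GRing.Theory.
Local Open Scope ring_scope.

Definition partial_order (R : Type) (le : R -> R -> Prop) : Prop :=
  (forall x, le x x) /\
  (forall x y, le x y -> le y x -> x = y) /\
  (forall x y z, le x y -> le y z -> le x z).

Definition translation_invariant (R : comPzRingType) (le : R -> R -> Prop) :=
  forall r s t : R, le r s -> le (r + t) (s + t).

Definition posc (R : comPzRingType) (le : R -> R -> Prop) (r : R) : Prop :=
  le 0 r.

Definition square_mul_stable (R : comPzRingType) (le : R -> R -> Prop) :=
  forall r s : R, posc le s -> posc le (r ^+ 2 * s).

Definition archimedean (R : comPzRingType) (le : R -> R -> Prop) :=
  forall g h : R, (forall k : nat, (1 <= k)%N -> posc le (g *+ k + h)) ->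
    posc le g.

Definition Loc (R : comPzRingType) (le : R -> R -> Prop) (s : R) : Prop :=
  (exists t, posc le t /\ s = 1 + t) /\
  (forall r : R, posc le (r * s) -> posc le r).

Definition localizable (R : comPzRingType) (le : R -> R -> Prop) :=
  forall r : R, exists s, Loc le s /\ le (- s) r /\ le r s.

From mathcomp Require Import all_boot all_algebra.
From mathcomp Require Import ring.
Local Open Scope ring_scope.
Import GRing.Theory.

(* Call e regular when r e >= 0 implies r >= 0; elements of Loc(R) are
   regular.  For regular D and 0 <= a <= D we get a (D - a) >= 0, because
   a (D - a) D = a^2 (D - a) + (D - a)^2 a.  Given p, q >= 0, localizability
   yields a regular s with p, q <= s, and a sum-of-squares identity gives
   s (D s + A q) >= 0 whenever D is regular and 0 <= A <= D.  If moreover D is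
   the square of a regular element and D >= m W >= 0 with m >= 2, then
   (D^2, W (D - W)) satisfies the same with m + 1, and
   s (D s + N W q) D = s (D^2 s + N W (D - W) q) + N W^2 q s; by induction,
   s (D s + N W q) >= 0 for all N >= m.  Taking D = s^2 and W = p (s - p),
   where s^2 - 4 W = (s - 2 p)^2, and cancelling s^2 gives s^2 + N p q >= 0
   for all N >= 4, hence p q >= 0 by the archimedean property. *)

Section PositiveCone.

Variables (R : comPzRingType) (le : R -> R -> Prop).
Hypotheses (le_refl : forall x, le x x)
  (le_trans : forall x y z, le x y -> le y z -> le x z).
Hypotheses (le_addr : translation_invariant le)
  (sqr_stable : square_mul_stable le)
  (arch : archimedean le) (loc : localizable le).

Local Notation pos := (posc le).

Definition pos_regular (e : R) := forall r, pos (r * e) -> pos r.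

Lemma posD x y : pos x -> pos y -> pos (x + y).
Proof.
by move=> px py; apply: le_trans py _; have := le_addr _ _ y px; rewrite add0r.
Qed.

Lemma posMn x n : pos x -> pos (x *+ n).
Proof.
move=> px; elim: n => [|n IHn]; first by rewrite mulr0n; apply: le_refl.
by rewrite mulrS; apply: posD.
Qed.

Lemma pos_subr x y : le x y -> pos (y - x).
Proof. by move=> le_xy; have := le_addr _ _ (- x) le_xy; rewrite subrr. Qed.

Lemma pos_regular_sqr e : pos_regular e -> pos_regular (e ^+ 2).
Proof. by move=> re r; rewrite expr2 mulrA => /re /re. Qed.

Lemma pos1 : pos 1.
Proof. by have [s [[_ rs] [_ ps]]] := loc 0; apply: rs; rewrite mul1r. Qed.

Lemma pos_sqr a : pos (a ^+ 2).
Proof. by have := sqr_stable a _ pos1; rewrite mulr1. Qed.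

Lemma pos_bounded x : exists2 t, pos t & pos (x + t).
Proof.
have [t [[[t0 [pt0 ->]] _] [le_tx _]]] := loc x.
by exists (1 + t0); [apply: posD pos1 pt0 | move/pos_subr: le_tx; rewrite opprK].
Qed.

(* Archimedean property with h := t *+ n, where x + t >= 0: dividing k by n.+1,
   x *+ k + t *+ n is a sum of multiples of x *+ n.+1, of x + t and of t. *)
Lemma pos_of_posMn x n : pos (x *+ n.+1) -> pos x.
Proof.
move=> pxn; have [t pt pxt] := pos_bounded x.
apply: (arch x (t *+ n)) => k _.
have mod_le : (k %% n.+1 <= n)%N by rewrite -ltnS ltn_mod.
have -> : x *+ k + t *+ n = (x *+ n.+1) *+ (k %/ n.+1)
    + ((x + t) *+ (k %% n.+1) + t *+ (n - k %% n.+1)).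
  rewrite {1}(divn_eq k n.+1) -[in t *+ n](subnKC mod_le) mulrnDr; ring.
by apply: posD; [apply: posMn | apply: posD; apply: posMn].
Qed.

Lemma archimedean_eventually g h n :
  (forall N, (n <= N)%N -> pos (g *+ N + h)) -> pos g.
Proof.
move=> pgh; apply: (pos_of_posMn _ n); apply: (arch _ h) => k k_gt0.
rewrite -mulrnA; apply: pgh.
exact: leq_trans (leqnSn n) (leq_pmulr _ k_gt0).
Qed.

Lemma pos_mul_subr D a : pos_regular D -> pos a -> pos (D - a) ->
  pos (a * (D - a)).
Proof.
move=> rD pa pDa; apply: rD.
have -> : a * (D - a) * D = a ^+ 2 * (D - a) + (D - a) ^+ 2 * a by ring.
by apply: posD; apply: sqr_stable.
Qed.

Lemma pos_subr_sqr D a : pos_regular D -> pos a -> pos (D - a) ->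
  pos (D ^+ 2 - a ^+ 2).
Proof.
move=> rD pa pDa.
have -> : D ^+ 2 - a ^+ 2 = (D - a) ^+ 2 + (a * (D - a)) *+ 2 by ring.
by apply: posD; [apply: pos_sqr | apply: posMn; apply: pos_mul_subr].
Qed.

Lemma sqr_subr_Mn_step e W m : pos_regular e -> pos W ->
  pos (e ^+ 2 - W *+ m.+2) ->
  pos ((e ^+ 2) ^+ 2 - (W * (e ^+ 2 - W)) *+ m.+3).
Proof.
move=> re pW peW; apply: (pos_of_posMn _ (m.+2 * m.+2).-1).
have -> : ((e ^+ 2) ^+ 2 - (W * (e ^+ 2 - W)) *+ m.+3) *+ (m.+2 * m.+2).-1.+1 =
    (W *+ m.+2 - e ^+ 2) ^+ 2 *+ m.+3
    + ((e ^+ 2 - W *+ m.+2) * e ^+ 2) *+ (m.+3 * m) + (e ^+ 2) ^+ 2.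
  by rewrite prednK //; ring.
apply: posD; last exact: pos_sqr.
apply: posD; apply: posMn; first exact: pos_sqr.
by rewrite mulrC; apply: sqr_stable.
Qed.

Section RegularBound.

Variables s q : R.
Hypotheses (rs : pos_regular s) (pq : pos q) (psq : pos (s - q)).

Lemma pos_mulq_s : pos (q * s).
Proof.
have -> : q * s = q * (s - q) + q ^+ 2 by ring.
by apply: posD; [apply: pos_mul_subr | apply: pos_sqr].
Qed.

Lemma pos_s_Ds_Aq D A : pos_regular D -> pos A -> pos (D - A) ->
  pos (s * (D * s + A * q)).
Proof.
move=> rD pA pDA; apply: (rD); apply: (pos_of_posMn _ 1).
have -> : s * (D * s + A * q) * D *+ 2 =
    (A * s + q * D) ^+ 2 + s ^+ 2 * (D ^+ 2 - A ^+ 2)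
    + D ^+ 2 * (s ^+ 2 - q ^+ 2) by ring.
apply: posD; first apply: posD; try exact: pos_sqr.
all: by apply: sqr_stable; apply: pos_subr_sqr.
Qed.

Lemma pos_s_sqr_Wq_Mn j : forall m e W, pos_regular e -> pos W ->
  pos (e ^+ 2 - W *+ m.+2) ->
  pos (s * (e ^+ 2 * s + (W * q) *+ (m.+2 + j))).
Proof.
elim: j => [|j IHj] m e W re pW peW;
  have rD : pos_regular (e ^+ 2) by apply: pos_regular_sqr.
  by rewrite addn0 -mulrnAl; apply: pos_s_Ds_Aq => //; apply: posMn.
have pDW : pos (e ^+ 2 - W).
  have -> : e ^+ 2 - W = (e ^+ 2 - W *+ m.+2) + W *+ m.+1.
    by rewrite mulrS; ring.
  by apply: posD => //; apply: posMn.
apply: (rD).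
have -> : s * (e ^+ 2 * s + (W * q) *+ (m.+2 + j.+1)) * e ^+ 2 =
    s * ((e ^+ 2) ^+ 2 * s + (W * (e ^+ 2 - W) * q) *+ (m.+3 + j))
    + (W ^+ 2 * (q * s)) *+ (m.+2 + j.+1) by rewrite addSnnS; ring.
apply: posD; first apply: IHj.
- exact: rD.
- exact: pos_mul_subr.
- exact: sqr_subr_Mn_step.
- by apply: posMn; apply: sqr_stable; apply: pos_mulq_s.
Qed.

Lemma pos_sqr_add_Mn p N : pos p -> pos (s - p) -> (4 <= N)%N ->
  pos (s ^+ 2 + (p * q) *+ N).
Proof.
move=> pp psp /subnKC <-.
have pW : pos (p * (s - p)) by apply: pos_mul_subr.
have psW : pos (s ^+ 2 - (p * (s - p)) *+ 4).
  have -> : s ^+ 2 - (p * (s - p)) *+ 4 = (s - p *+ 2) ^+ 2 by ring.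
  exact: pos_sqr.
apply: (pos_regular_sqr s rs).
have -> : (s ^+ 2 + (p * q) *+ (4 + (N - 4))) * s ^+ 2 =
    s * (s ^+ 2 * s + (p * (s - p) * q) *+ (4 + (N - 4)))
    + (p ^+ 2 * (q * s)) *+ (4 + (N - 4)) by ring.
apply: posD; first by apply: pos_s_sqr_Wq_Mn.
by apply: posMn; apply: sqr_stable; apply: pos_mulq_s.
Qed.

End RegularBound.

Lemma pos_mul p q : pos p -> pos q -> pos (p * q).
Proof.
move=> pp pq; have [s [[_ rs] [_ /pos_subr pspq]]] := loc (p + q).
have psp : pos (s - p).
  have -> : s - p = (s - (p + q)) + q by ring.
  exact: posD.
have psq : pos (s - q).
  have -> : s - q = (s - (p + q)) + p by ring.
  exact: posD.
apply: (archimedean_eventually _ (s ^+ 2) 4) => N N_ge4.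
by rewrite addrC; apply: pos_sqr_add_Mn.
Qed.

End PositiveCone.

Theorem proposition5 (R : comPzRingType) (le : R -> R -> Prop) :
  partial_order le ->
  translation_invariant le ->
  square_mul_stable le ->
  archimedean le ->
  localizable le ->
  forall p q : R, posc le p -> posc le q -> posc le (p * q).
Proof. by move=> [le_refl [_ le_trans]]; apply: pos_mul. Qed.
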